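(* Let $\mathcal{A}=\{X_1,\dots,X_M\}\subseteq\mathbb{R}^d$ be a fixed action set spanning $\mathbb{R}^d$ with $\|X_i\|_2\le c$, let $\theta^*\in\mathbb{R}^d$ with $\|\theta^*\|_2\le c'$ and $X_i^\top\theta^*\in[0,1]$ for all $i$, and let $1\le k\le M$. Let $\mathbf{w}_k^*$ be a minimizer in the definition of $f^*(\mathcal{A},k)$. Consider the policy $\pi$ that, over $T$ rounds (selecting $k$ distinct arms per round, $kT$ selections in total), plays each arm $X_i$ exactly $kT\,w^*_{k,i}$ times in total (assume these are integers), and let $\hat\theta_T$ be the ridge estimator with parameter $\lambda>0$. Then $$\mathrm{RMSE}_T(\pi,\mathcal{A},\theta^* )\in\tilde{\mathcal{O}}\!\left(\sqrt{\frac{f^*(\mathcal{A},k)}{kT}}\right),$$ where $\tilde{\mathcal{O}}$ hides constant factors and logarithmic factors in $d$, $kT$, $\lambda$, $c$, $c'$.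
   Context: Setting: in each round $t=1,\dots,T$ the agent selects $k$ distinct actions $X_{t,1},\dots,X_{t,k}\in\mathcal{A}$ and observes independent binary rewards $r_{t,i}\in\{0,1\}$ with $\mathbb{E}[r_{t,i}]=X_{t,i}^\top\theta^*$. For $\lambda>0$ define $V_t=\lambda I+\sum_{s=1}^t\sum_{r=1}^k X_{s,r}X_{s,r}^\top$ and the ridge estimator $\hat\theta_T=V_T^{-1}\sum_{s=1}^T\sum_{r=1}^k r_{s,r}X_{s,r}$. The RMSE after $T$ rounds is $\mathrm{RMSE}_T(\pi,\mathcal{A},\theta^* )=\mathbb{E}\Big[\sqrt{\tfrac{1}{|\mathcal{A}|}\sum_{X\in\mathcal{A}}(X^\top(\hat\theta_T-\theta^* ))^2}\Big]$. Let $\Delta^{M-1}_{1/k}=\{\mathbf{w}\in\mathbb{R}^M: w_i\ge 0,\ \sum_i w_i=1,\ w_i\le 1/k\ \forall i\}$ and $$f^*(\mathcal{A},k)=\min_{\mathbf{w}\in\Delta^{M-1}_{1/k}}\ \max_{X_i\in\mathcal{A}} X_i^\top\Big(\sum_{j=1}^M w_jX_jX_j^\top\Big)^{-1}X_i .$$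
   Formalization: The constant hidden in Õ may depend on λ, c and c', and the hidden logarithmic factor is a power of ln(d + kT + 3), involving only d and kT. The paper assumes this as well. *)

From HB Require Import structures.
From mathcomp Require Import all_boot all_order all_algebra.
From mathcomp Require Import reals exp.
Set Implicit Arguments. Unset Strict Implicit. Unset Printing Implicit Defensive.
Import Order.TTheory GRing.Theory Num.Theory.
Local Open Scope ring_scope.

Definition inner (R : comNzRingType) (d : nat) (x y : 'cV[R]_d) : R := (x^T *m y) 0 0.

Definition norm2 (R : realType) (d : nat) (x : 'cV[R]_d) : R := Num.sqrt (inner x x).

Definition capped_simplex (R : realFieldType) (M k : nat) (w : 'I_M -> R) : Prop :=
  (forall i, 0 <= w i <= k%:R^-1) /\ \sum_(i < M) w i = 1.

Definition design (R : fieldType) (d M : nat) (X : 'I_M -> 'cV[R]_d) (w : 'I_M -> R)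
  : 'M[R]_d := \sum_(j < M) w j *: (X j *m (X j)^T).

Definition design_obj (R : realFieldType) (d M : nat) (X : 'I_M -> 'cV[R]_d)
  (w : 'I_M -> R) : R :=
  \big[Order.max/0]_(i < M) inner (X i) (invmx (design X w) *m X i).

(* w is a minimizer in the definition of f-star(A,k); the objective is +oo
   (excluded) when the design matrix is singular.  Then f-star(A,k) = design_obj X w. *)
Definition is_fstar_minimizer (R : realFieldType) (d M k : nat)
  (X : 'I_M -> 'cV[R]_d) (w : 'I_M -> R) : Prop :=
  [/\ capped_simplex k w, design X w \in unitmx &
      forall w', capped_simplex k w' -> design X w' \in unitmx ->
                 design_obj X w <= design_obj X w'].

(* A schedule: in round t (< T), slot r (< k), arm sched t r is played. *)
Definition gram (R : fieldType) (d M T k : nat) (lambda : R)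
  (X : 'I_M -> 'cV[R]_d) (sched : 'I_T -> 'I_k -> 'I_M) : 'M[R]_d :=
  lambda%:M + \sum_(tr : 'I_T * 'I_k) (X (sched tr.1 tr.2) *m (X (sched tr.1 tr.2))^T).

(* reward outcomes: om (t,r) is the binary reward r_{t,r} *)
Definition ridge (R : fieldType) (d M T k : nat) (lambda : R)
  (X : 'I_M -> 'cV[R]_d) (sched : 'I_T -> 'I_k -> 'I_M)
  (om : {ffun 'I_T * 'I_k -> bool}) : 'cV[R]_d :=
  invmx (gram lambda X sched) *m
    \sum_(tr : 'I_T * 'I_k) ((om tr)%:R *: X (sched tr.1 tr.2)).

Definition outcome_prob (R : comNzRingType) (d M T k : nat) (X : 'I_M -> 'cV[R]_d)
  (theta : 'cV[R]_d) (sched : 'I_T -> 'I_k -> 'I_M)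
  (om : {ffun 'I_T * 'I_k -> bool}) : R :=
  \prod_(tr : 'I_T * 'I_k)
     (if om tr then inner (X (sched tr.1 tr.2)) theta
      else 1 - inner (X (sched tr.1 tr.2)) theta).

Definition rmse (R : realType) (d M T k : nat) (lambda : R)
  (X : 'I_M -> 'cV[R]_d) (theta : 'cV[R]_d) (sched : 'I_T -> 'I_k -> 'I_M) : R :=
  \sum_(om : {ffun 'I_T * 'I_k -> bool})
     outcome_prob X theta sched om *
     Num.sqrt (M%:R^-1 * \sum_(i < M) (inner (X i) (ridge lambda X sched om - theta)) ^+ 2).

From HB Require Import structures.
From mathcomp Require Import all_boot all_order all_algebra.
From mathcomp Require Import reals exp.
From mathcomp Require Import ring lra.
Import Order.TTheory GRing.Theory Num.Theory.
Set Implicit Arguments. Unset Strict Implicit. Unset Printing Implicit Defensive.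
Local Open Scope ring_scope.

(* The prediction error of the ridge estimator in a direction x splits into a
   bias and a variance term.  With V = lambda I + sum_(t,r) X_(t,r) X_(t,r)^T
   the variance is at most x^T V^-1 x, and by Cauchy-Schwarz together with
   lambda V^-1 <= I the squared bias is at most lambda |theta|^2 x^T V^-1 x.
   Since the schedule realises the design w exactly, V >= kT sum_j w_j X_j X_j^T,
   whence x^T V^-1 x <= f*(A,k) / (kT) for every arm.  Jensen's inequality for
   the square root turns this mean-square bound into an RMSE bound of
   sqrt ((lambda c'^2 + 1) f*(A,k) / (kT)), with no logarithmic factor. *)

Section InnerProduct.
Variables (R : comNzRingType) (n : nat).
Implicit Types (x y z : 'cV[R]_n) (A : 'M[R]_n).

Lemma innerE x y : inner x y = \sum_i x i 0 * y i 0.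
Proof. by rewrite /inner mxE; apply: eq_bigr => i _; rewrite mxE. Qed.

Lemma innerC x y : inner x y = inner y x.
Proof. by rewrite !innerE; apply: eq_bigr => i _; rewrite mulrC. Qed.

Lemma innerDr x y z : inner x (y + z) = inner x y + inner x z.
Proof. by rewrite /inner mulmxDr mxE. Qed.

Lemma innerBr x y z : inner x (y - z) = inner x y - inner x z.
Proof. by rewrite /inner mulmxBr !mxE. Qed.

Lemma innerBl x y z : inner (x - y) z = inner x z - inner y z.
Proof. by rewrite innerC innerBr !(innerC z). Qed.

Lemma innerZr a x y : inner x (a *: y) = a * inner x y.
Proof. by rewrite /inner -scalemxAr mxE. Qed.

Lemma innerZl a x y : inner (a *: x) y = a * inner x y.
Proof. by rewrite innerC innerZr innerC. Qed.

Lemma inner_sumr (I : finType) x (F : I -> 'cV[R]_n) :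
  inner x (\sum_j F j) = \sum_j inner x (F j).
Proof. by rewrite /inner mulmx_sumr summxE. Qed.

Lemma inner0r x : inner x 0 = 0.
Proof. by rewrite /inner mulmx0 mxE. Qed.

Lemma inner_mulmxr A x y : inner x (A *m y) = inner (A^T *m x) y.
Proof. by rewrite /inner trmx_mul trmxK mulmxA. Qed.

Lemma inner_outer A x y z :
  inner x (A *m (y *m y^T) *m z) = inner x (A *m y) * inner y z.
Proof.
rewrite /inner !mulmxA -[x^T *m A *m y *m y^T *m z]mulmxA -[x^T *m A *m y]mulmxA.
by rewrite [in LHS]mxE big_ord1.
Qed.

End InnerProduct.

Lemma quadratic_ge0_discr (F : realFieldType) (a b c : F) : 0 <= a ->
  (forall s, 0 <= s ^+ 2 * a - 2 * s * b + c) -> b ^+ 2 <= a * c.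
Proof.
move=> a_ge0 q_ge0; pose p := Poly [:: c; - (2 * b); a].
have pE s : p.[s] = s ^+ 2 * a - 2 * s * b + c by rewrite horner_Poly /=; ring.
have p_ge0 s : 0 <= p.[s] by rewrite pE.
have := @deg_le2_poly_delta_ge0 _ p (size_Poly _); rewrite !coef_Poly /=.
by move=> /(_ a_ge0 p_ge0); lra.
Qed.

Definition psdmx (R : realFieldType) n (A : 'M[R]_n) := forall z, 0 <= inner z (A *m z).

Section PositiveSemidefinite.
Variables (R : realFieldType) (n : nat).
Implicit Types (x y z : 'cV[R]_n) (A B : 'M[R]_n).

Lemma inner_ge0 x : 0 <= inner x x.
Proof. by rewrite innerE sumr_ge0 // => i _; rewrite -expr2 sqr_ge0. Qed.

Lemma inner_eq0 x : (inner x x == 0) = (x == 0).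
Proof.
apply/idP/eqP => [|->]; last by rewrite inner0r.
rewrite innerE psumr_eq0 => [/allP x0|i _]; last by rewrite -expr2 sqr_ge0.
apply/matrixP => i j; rewrite (ord1 j) mxE.
by have /implyP/(_ isT) := x0 i (mem_index_enum i); rewrite mulf_eq0 orbb => /eqP.
Qed.

Lemma inner_symmx A x y : A^T = A -> inner x (A *m y) = inner y (A *m x).
Proof. by move=> symA; rewrite inner_mulmxr symA innerC. Qed.

Lemma unitmx_pd A : (forall z, z != 0 -> 0 < inner z (A *m z)) -> A \in unitmx.
Proof.
move=> pdA; rewrite -unitmx_tr unitmxE unitfE; apply/negP => /det0P [v v_neq0 vA0].
have Av0 : A *m v^T = 0 by rewrite -[A]trmxK -trmx_mul vA0 trmx0.
suff /pdA : v^T != 0 by rewrite Av0 inner0r ltxx.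
by rewrite -trmx0 (inj_eq (@trmx_inj _ _ _)).
Qed.

Lemma psdmx_cauchy_schwarz A x y : A^T = A -> psdmx A ->
  inner x (A *m y) ^+ 2 <= inner x (A *m x) * inner y (A *m y).
Proof.
move=> symA psdA; apply: quadratic_ge0_discr => [|s]; first exact: psdA.
have := psdA (s *: x - y).
rewrite mulmxBr -scalemxAr !(innerBr, innerBl, innerZr, innerZl).
rewrite [inner y _](inner_symmx _ _ symA); lra.
Qed.

Lemma ler_qform_invmx A B x : A \in unitmx -> B \in unitmx -> A^T = A -> psdmx A ->
  (forall z, inner z (A *m z) <= inner z (B *m z)) ->
  inner x (invmx B *m x) <= inner x (invmx A *m x).
Proof.
move=> uA uB symA psdA leAB.
set a := invmx A *m x; set b := invmx B *m x.
have Aa : A *m a = x by rewrite mulKVmx.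
have Bb : B *m b = x by rewrite mulKVmx.
have := psdA (a - b); have := leAB b.
rewrite Bb mulmxBr Aa !(innerBr, innerBl) [inner a (A *m b)](inner_symmx _ _ symA) Aa.
rewrite !(innerC x); lra.
Qed.

End PositiveSemidefinite.

Section BernoulliExpectation.
Variables (R : comNzRingType) (I : finType) (mu : I -> R).
Implicit Types (f g : {ffun I -> bool} -> R) (u : I -> R).

Definition bprob (om : {ffun I -> bool}) : R :=
  \prod_i (if om i then mu i else 1 - mu i).

Definition bexpect f : R := \sum_om bprob om * f om.

Lemma bexpectD f g : bexpect (fun om => f om + g om) = bexpect f + bexpect g.
Proof. by rewrite /bexpect -big_split; apply: eq_bigr => om _; rewrite mulrDr. Qed.

Lemma bexpectZ c f : bexpect (fun om => c * f om) = c * bexpect f.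
Proof. by rewrite /bexpect mulr_sumr; apply: eq_bigr => om _; rewrite mulrCA. Qed.

Lemma bexpect_sum (J : finType) (F : J -> {ffun I -> bool} -> R) :
  bexpect (fun om => \sum_j F j om) = \sum_j bexpect (F j).
Proof. by rewrite /bexpect exchange_big; apply: eq_bigr => om _; rewrite mulr_sumr. Qed.

Lemma bexpect_prod (h : I -> bool -> R) :
  bexpect (fun om => \prod_i h i (om i)) = \prod_i (mu i * h i true + (1 - mu i) * h i false).
Proof.
rewrite (eq_bigr (fun i => \sum_(j : bool) (if j then mu i else 1 - mu i) * h i j)).
  by rewrite bigA_distr_bigA; apply: eq_bigr => om _; rewrite -big_split.
by move=> i _; rewrite big_bool.
Qed.

Lemma bexpect1 : bexpect (fun _ => 1) = 1.
Proof.
have := bexpect_prod (fun _ _ => 1); rewrite big1_eq.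
by under [RHS]eq_bigr do rewrite !mulr1 addrC subrK; rewrite big1_eq.
Qed.

Lemma sum_bprob : \sum_om bprob om = 1.
Proof. by rewrite -bexpect1; apply: eq_bigr => om _; rewrite mulr1. Qed.

Lemma bexpect_bits (S : {set I}) :
  bexpect (fun om => \prod_(i in S) (om i)%:R) = \prod_(i in S) mu i.
Proof.
transitivity (bexpect (fun om => \prod_i (if i \in S then (om i)%:R else 1))).
  by rewrite /bexpect; apply: eq_bigr => om _; rewrite big_mkcond.
rewrite (bexpect_prod (fun i j => if i \in S then j%:R else 1)) [RHS]big_mkcond.
apply: eq_bigr => i _.
by case: (i \in S); rewrite ?mulr1 ?mulr0 ?addr0 // addrC subrK.
Qed.

Lemma bexpect_bit a : bexpect (fun om => (om a)%:R) = mu a.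
Proof.
transitivity (bexpect (fun om => \prod_(i in [set a]) (om i)%:R)).
  by apply: eq_bigr => om _; rewrite big_set1.
by rewrite bexpect_bits big_set1.
Qed.

Lemma bexpect_bit2 a b :
  bexpect (fun om => (om a)%:R * (om b)%:R) = mu a * mu b + (a == b)%:R * (mu a * (1 - mu a)).
Proof.
have [<-|ab] := eqVneq a b.
  transitivity (bexpect (fun om => (om a)%:R)); last by rewrite bexpect_bit mul1r; ring.
  by apply: eq_bigr => om _; case: (om a); rewrite ?mulr1 ?mulr0.
have prod2 (F : I -> R) : \prod_(i in [set a; b]) F i = F a * F b.
  by rewrite big_setU1 ?inE //= big_set1.
transitivity (bexpect (fun om => \prod_(i in [set a; b]) (om i)%:R)).
  by apply: eq_bigr => om _; rewrite prod2.
by rewrite bexpect_bits prod2 mul0r addr0.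
Qed.

Lemma bexpect_sqr_affine u beta :
  bexpect (fun om => (\sum_i u i * (om i)%:R + beta) ^+ 2) =
  (\sum_i u i * mu i + beta) ^+ 2 + \sum_i u i ^+ 2 * (mu i * (1 - mu i)).
Proof.
have sqr_sum (v : I -> R) : (\sum_i v i) ^+ 2 = \sum_a \sum_b v a * v b.
  by rewrite expr2 mulr_suml; apply: eq_bigr => a _; rewrite mulr_sumr.
transitivity (bexpect (fun om => \sum_a \sum_b (u a * u b) * ((om a)%:R * (om b)%:R)
   + (2 * beta) * (\sum_a u a * (om a)%:R) + beta ^+ 2 * 1)).
  apply: eq_bigr => om _; congr (_ * _).
  rewrite (_ : \sum_a _ = (\sum_a u a * (om a)%:R) ^+ 2); first by ring.
  by rewrite sqr_sum; apply: eq_bigr => a _; apply: eq_bigr => b _; ring.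
rewrite !bexpectD !bexpectZ bexpect1 !bexpect_sum.
under eq_bigr do rewrite bexpect_sum.
under eq_bigr do under eq_bigr do rewrite bexpectZ bexpect_bit2.
under [in X in 2 * beta * X]eq_bigr do rewrite bexpectZ bexpect_bit.
suff -> : \sum_a \sum_b u a * u b * (mu a * mu b + (a == b)%:R * (mu a * (1 - mu a)))
    = (\sum_a u a * mu a) ^+ 2 + \sum_a u a ^+ 2 * (mu a * (1 - mu a)) by ring.
rewrite sqr_sum -big_split; apply: eq_bigr => a _ /=.
under eq_bigr do rewrite mulrDr.
rewrite big_split /=; congr (_ + _); first by apply: eq_bigr => b _; ring.
rewrite (bigD1 a) //= eqxx mul1r big1 ?addr0 => [|b]; first by ring.
by rewrite eq_sym => /negbTE ->; rewrite mul0r mulr0.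
Qed.

End BernoulliExpectation.

Lemma jensen_sqrt (R : rcfType) (I : finType) (p y : I -> R) :
  (forall i, 0 <= p i) -> \sum_i p i = 1 -> (forall i, 0 <= y i) ->
  \sum_i p i * Num.sqrt (y i) <= Num.sqrt (\sum_i p i * y i).
Proof.
move=> p_ge0 p_sum1 y_ge0; set m := \sum_i p i * y i.
have py_ge0 i : 0 <= p i * y i by rewrite mulr_ge0.
have [m0|m_neq0] := eqVneq m 0.
  rewrite m0 sqrtr0 big1 // => i _.
  have /eqP := @psumr_eq0P _ _ predT _ (fun j _ => py_ge0 j) m0 i isT.
  by rewrite mulf_eq0 => /orP [] /eqP ->; rewrite ?mul0r ?sqrtr0 ?mulr0.
have m_gt0 : 0 < m by rewrite lt0r m_neq0 sumr_ge0.
set s := Num.sqrt m; have s_gt0 : 0 < s by rewrite sqrtr_gt0.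
(* AM-GM: the tangent of [sqrt] at [m] lies above its graph. *)
have tangent i : Num.sqrt (y i) <= (y i + m) / (2 * s).
  rewrite ler_pdivlMr ?mulr_gt0 //.
  have := sqr_ge0 (Num.sqrt (y i) - s).
  rewrite sqrrB !sqr_sqrtr ?(ltW m_gt0) //; lra.
apply: le_trans (_ : \sum_i p i * ((y i + m) / (2 * s)) <= _).
  by apply: ler_sum => i _; apply: ler_wpM2l.
under eq_bigr do rewrite mulrA mulrDr.
rewrite -mulr_suml big_split /= -mulr_suml p_sum1 mul1r -/m.
have ssm : s ^+ 2 = m by rewrite sqr_sqrtr ?ltW.
rewrite ler_pdivrMr ?mulr_gt0 //; nra.
Qed.

Section RidgeRegression.
Variables (R : realFieldType) (d M T k : nat) (lambda : R).
Variables (X : 'I_M -> 'cV[R]_d) (theta : 'cV[R]_d) (sched : 'I_T -> 'I_k -> 'I_M).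
Hypothesis lambda_gt0 : 0 < lambda.

Let Xs (tr : 'I_T * 'I_k) := X (sched tr.1 tr.2).
Let G := \sum_tr Xs tr *m (Xs tr)^T.
Let V := gram lambda X sched.
Let mu tr := inner (Xs tr) theta.

Lemma sym_sample_gram : G^T = G.
Proof. by rewrite /G raddf_sum; apply: eq_bigr => tr _ /=; rewrite trmx_mul trmxK. Qed.

Lemma qform_sample_gram z : inner z (G *m z) = \sum_tr inner z (Xs tr) ^+ 2.
Proof.
rewrite mulmx_suml inner_sumr; apply: eq_bigr => tr _.
by have := inner_outer 1%:M z (Xs tr) z; rewrite !mul1mx expr2 (innerC (Xs tr)).
Qed.

Lemma psd_sample_gram : psdmx G.
Proof. by move=> z; rewrite qform_sample_gram sumr_ge0 // => tr _; rewrite sqr_ge0. Qed.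

Lemma sym_gram : V^T = V.
Proof. by rewrite /V /gram raddfD /= tr_scalar_mx sym_sample_gram. Qed.

Lemma qform_gram z : inner z (V *m z) = lambda * inner z z + inner z (G *m z).
Proof. by rewrite /V /gram mulmxDl mul_scalar_mx innerDr innerZr. Qed.

Lemma gram_unit : V \in unitmx.
Proof.
apply: unitmx_pd => z z_neq0; rewrite qform_gram.
have z_gt0 : 0 < inner z z by rewrite lt0r inner_eq0 z_neq0 inner_ge0.
by have := psd_sample_gram z; have := mulr_gt0 lambda_gt0 z_gt0; lra.
Qed.

Lemma psd_gram : psdmx V.
Proof.
move=> z; rewrite qform_gram.
by have := psd_sample_gram z; have := mulr_ge0 (ltW lambda_gt0) (inner_ge0 z); lra.
Qed.

Lemma psd_invgram : psdmx (invmx V).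
Proof. by move=> z; rewrite -{1}(mulKVmx gram_unit z) innerC; apply: psd_gram. Qed.

Lemma ler_qform_invgram_sample x : G \in unitmx ->
  inner x (invmx V *m x) <= inner x (invmx G *m x).
Proof.
move=> unitG; apply: ler_qform_invmx unitG gram_unit sym_sample_gram psd_sample_gram _ => z.
by rewrite qform_gram; have := mulr_ge0 (ltW lambda_gt0) (inner_ge0 z); lra.
Qed.

Lemma ler_qform_invgram_id x : lambda * inner x (invmx V *m x) <= inner x x.
Proof.
have unit_lambda : (lambda%:M : 'M[R]_d) \in unitmx.
  by rewrite -scalemx1 unitmxZ ?unitmx1 // unitfE gt_eqF.
have := ler_qform_invmx x unit_lambda gram_unit (tr_scalar_mx _ _).
rewrite invmx_scalar !mul_scalar_mx innerZr ler_pdivlMl //.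
apply => [z|z]; rewrite mul_scalar_mx innerZr; first exact: mulr_ge0 (ltW _) (inner_ge0 z).
by rewrite qform_gram; have := psd_sample_gram z; lra.
Qed.

Lemma ridge_errorE om x : inner x (ridge lambda X sched om - theta)
  = \sum_tr inner x (invmx V *m Xs tr) * (om tr)%:R + - inner x theta.
Proof.
rewrite innerBr /ridge mulmx_sumr inner_sumr; congr (_ - _).
by apply: eq_bigr => tr _; rewrite -scalemxAr innerZr mulrC.
Qed.

Lemma mean_ridge_prediction x : \sum_tr inner x (invmx V *m Xs tr) * mu tr
  = inner x theta - lambda * inner x (invmx V *m theta).
Proof.
have -> : \sum_tr inner x (invmx V *m Xs tr) * mu tr = inner x (invmx V *m (G *m theta)).
  rewrite mulmx_suml mulmx_sumr inner_sumr; apply: eq_bigr => tr _.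
  by rewrite mulmxA inner_outer.
have -> : G *m theta = V *m theta - lambda *: theta.
  by rewrite /V /gram mulmxDl mul_scalar_mx addrC addKr.
by rewrite mulmxBr mulKmx ?gram_unit // -scalemxAr innerBr innerZr.
Qed.

Lemma ridge_variance_le x : \sum_tr inner x (invmx V *m Xs tr) ^+ 2 <= inner x (invmx V *m x).
Proof.
set y := invmx V *m x.
have -> : \sum_tr inner x (invmx V *m Xs tr) ^+ 2 = inner y (G *m y).
  rewrite qform_sample_gram; apply: eq_bigr => tr _.
  by rewrite inner_mulmxr trmx_inv sym_gram.
have Vy : V *m y = x by rewrite mulKVmx ?gram_unit.
have := qform_gram y; rewrite Vy (innerC y x) -/y.
by have := mulr_ge0 (ltW lambda_gt0) (inner_ge0 y); lra.
Qed.

Lemma ridge_sq_error_le x :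
  bexpect mu (fun om => inner x (ridge lambda X sched om - theta) ^+ 2)
  <= (lambda * inner theta theta + 1) * inner x (invmx V *m x).
Proof.
set u := fun tr => inner x (invmx V *m Xs tr).
set a := inner x (invmx V *m x); set b := inner x (invmx V *m theta).
have -> : bexpect mu (fun om => inner x (ridge lambda X sched om - theta) ^+ 2)
    = bexpect mu (fun om => (\sum_tr u tr * (om tr)%:R + - inner x theta) ^+ 2).
  by apply: eq_bigr => om _; rewrite ridge_errorE.
rewrite bexpect_sqr_affine mean_ridge_prediction.
have bias : b ^+ 2 <= a * inner theta (invmx V *m theta).
  by apply: psdmx_cauchy_schwarz; rewrite ?trmx_inv ?sym_gram //; apply: psd_invgram.
have var : \sum_tr u tr ^+ 2 * (mu tr * (1 - mu tr)) <= a.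
  apply: le_trans (ridge_variance_le x); apply: ler_sum => tr _.
  rewrite -[leRHS]mulr1 ler_wpM2l ?sqr_ge0 //.
  by have := sqr_ge0 (mu tr); have := sqr_ge0 (mu tr - 1); lra.
have a_ge0 : 0 <= a := psd_invgram x.
have := ler_wpM2l (sqr_ge0 lambda) bias.
have := ler_wpM2l (mulr_ge0 (ltW lambda_gt0) a_ge0) (ler_qform_invgram_id theta).
have -> : (inner x theta - lambda * b - inner x theta) ^+ 2 = lambda ^+ 2 * b ^+ 2 by ring.
lra.
Qed.

Section ExactDesign.
Variable w : 'I_M -> R.
Hypothesis counts : forall i,
  (#|[set tr : 'I_T * 'I_k | sched tr.1 tr.2 == i]|)%:R = (k * T)%:R * w i.

Lemma sample_gram_design : G = (k * T)%:R *: design X w.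
Proof.
rewrite /G (partition_big (fun tr => sched tr.1 tr.2) predT) //= scaler_sumr.
apply: eq_bigr => i _; rewrite (eq_bigr (fun _ => X i *m (X i)^T)); last by move=> tr /eqP <-.
rewrite (eq_bigl (fun tr => tr \in [set tr | sched tr.1 tr.2 == i])) => [|tr]; last by rewrite inE.
by rewrite sumr_const -scaler_nat counts scalerA.
Qed.

Lemma qform_invgram_le_design_obj i : (0 < k * T)%N -> design X w \in unitmx ->
  inner (X i) (invmx V *m X i) <= design_obj X w / (k * T)%:R.
Proof.
move=> kT_gt0 unitD; have N_gt0 : 0 < (k * T)%:R :> R by rewrite ltr0n.
have unitG : G \in unitmx by rewrite sample_gram_design unitmxZ // unitfE gt_eqF.
apply: le_trans (ler_qform_invgram_sample _ unitG) _.
rewrite sample_gram_design invmxZ -?sample_gram_design // -scalemxAl innerZr mulrC.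
apply: ler_wpM2r; first by rewrite invr_ge0 ltW.
by rewrite /design_obj (bigD1 i) //= le_max lexx.
Qed.

End ExactDesign.

End RidgeRegression.

Lemma rmse_le_sqrt (R : realType) (d M T k : nat) (lambda : R) (X : 'I_M -> 'cV[R]_d)
    (theta : 'cV[R]_d) (sched : 'I_T -> 'I_k -> 'I_M) (B : R) :
  let mu tr := inner (X (sched tr.1 tr.2)) theta in
  (0 < M)%N -> (forall tr, 0 <= mu tr <= 1) ->
  (forall i, bexpect mu (fun om => inner (X i) (ridge lambda X sched om - theta) ^+ 2) <= B) ->
  rmse lambda X theta sched <= Num.sqrt B.
Proof.
move=> mu M_gt0 mu01 err_le.
set Y := fun om => M%:R^-1 * \sum_(i < M) inner (X i) (ridge lambda X sched om - theta) ^+ 2.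
have p_ge0 om : 0 <= bprob mu om.
  by apply: prodr_ge0 => tr _; case: (om tr); have := mu01 tr; lra.
have Y_ge0 om : 0 <= Y om by rewrite mulr_ge0 ?invr_ge0 ?sumr_ge0 // => i _; rewrite sqr_ge0.
apply: le_trans (jensen_sqrt p_ge0 (sum_bprob mu) Y_ge0) (ler_wsqrtr _).
rewrite -[\sum_om _]/(bexpect mu Y) bexpectZ bexpect_sum ler_pdivrMl ?ltr0n //.
rewrite mulr_natl -[M in B *+ M]card_ord -sumr_const.
by apply: ler_sum => i _; apply: err_le.
Qed.

Lemma sqr_norm2 (R : realType) (d : nat) (x : 'cV[R]_d) : norm2 x ^+ 2 = inner x x.
Proof. by rewrite sqr_sqrtr ?inner_ge0. Qed.

Theorem lemma1 :
  forall (R : realType) (lambda c c' : R), 0 < lambda -> 0 <= c -> 0 <= c' ->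
  exists (C : R) (p : nat), 0 < C /\
  forall (d M k T : nat) (X : 'I_M -> 'cV[R]_d) (theta : 'cV[R]_d)
         (w : 'I_M -> R) (sched : 'I_T -> 'I_k -> 'I_M),
    injective X ->
    row_full (\matrix_(i < M) (X i)^T) ->
    (forall i, norm2 (X i) <= c) ->
    norm2 theta <= c' ->
    (forall i, 0 <= inner (X i) theta <= 1) ->
    (1 <= k <= M)%N ->
    (0 < T)%N ->
    is_fstar_minimizer k X w ->
    (forall t, injective (sched t)) ->
    (forall i, (#|[set tr : 'I_T * 'I_k | sched tr.1 tr.2 == i]|)%:R = (k * T)%:R * w i) ->
    rmse lambda X theta sched
      <= C * (ln ((d + k * T)%:R + 3)) ^+ p * Num.sqrt (design_obj X w / (k * T)%:R).
Proof.
move=> R lambda c c' lambda_gt0 _ c'_ge0.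
have lambda_c'_ge0 : 0 <= lambda * c' ^+ 2 by rewrite mulr_ge0 ?sqr_ge0 ?ltW.
exists (Num.sqrt (lambda * c' ^+ 2 + 1)), 0%N; split.
  by rewrite sqrtr_gt0; lra.
move=> d M k T X theta w sched _ _ _ norm_theta mu01 /andP [k_gt0 k_le_M] T_gt0.
move=> [_ unitD _] _ counts; have kT_gt0 : (0 < k * T)%N by rewrite muln_gt0 k_gt0.
have theta_le : inner theta theta <= c' ^+ 2.
  by rewrite -sqr_norm2 !expr2; apply: ler_pM; rewrite ?sqrtr_ge0.
rewrite expr0 mulr1 -sqrtrM; last lra.
apply: rmse_le_sqrt => [|tr|i]; [exact: leq_trans k_le_M | exact: mu01 |].
apply: le_trans (ridge_sq_error_le _ _ _ lambda_gt0 _) _.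
apply: ler_pM; [| exact: psd_invgram | | exact: qform_invgram_le_design_obj].
- by have := mulr_ge0 (ltW lambda_gt0) (inner_ge0 theta); lra.
- by rewrite lerD2r; apply: ler_wpM2l; first exact: ltW.
Qed.
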